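(* Let $f:\mathbb{R}^d\to\mathbb{R}$ be twice differentiable with $f^*:=\sup_\theta f(\theta)$, $f(\theta)<f^*$ for all $\theta$, $L_1$ non-uniform smooth, and satisfying the reversed Łojasiewicz inequality $\|\nabla f(\theta)\|_2\le\nu[f^*-f(\theta)]$ with $\nu>0$. Fix $h\in(0,1)$, $\eta_{\max}>0$ and a point $\theta_t$. Then the exact backtracking procedure from $\eta_{\max}$ with the Armijo condition on the log-loss $$\ln(f^*-f(\theta_t+\eta_t\nabla f(\theta_t)))\le\ln(f^*-f(\theta_t))-h\,\eta_t\frac{\|\nabla f(\theta_t)\|_2^2}{f^*-f(\theta_t)}$$ terminates and returns a step-size $$\eta_t\ge\min\Big\{\eta_{\max},\ \frac{2(1-h)}{L_1\nu\,[f^*-f(\theta_t)]}\Big\}.$$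
   Context: $f$ is $L_1$ non-uniform smooth: $|f(\theta)-f(\theta')-\langle\nabla f(\theta'),\theta-\theta'\rangle|\le\frac{L_1\|\nabla f(\theta')\|_2}{2}\|\theta-\theta'\|_2^2$ for all $\theta,\theta'$. Exact backtracking returns the largest step-size in $(0,\eta_{\max}]$ satisfying the condition. *)

From HB Require Import structures.
From mathcomp Require Import all_boot all_order all_algebra.
From mathcomp Require Import all_classical all_reals all_analysis.
Set Implicit Arguments. Unset Strict Implicit. Unset Printing Implicit Defensive.
Import Order.TTheory GRing.Theory Num.Theory.
Import numFieldNormedType.Exports.
Local Open Scope classical_set_scope.
Local Open Scope ring_scope.

Definition dotv {R : realType} {d : nat} (u v : 'rV[R]_d) : R :=
  \sum_(i < d) u ord0 i * v ord0 i.
Definition norm2 {R : realType} {d : nat} (u : 'rV[R]_d) : R :=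
  Num.sqrt (dotv u u).

Definition basisv {R : realType} {d : nat} (i : 'I_d) : 'rV[R]_d := delta_mx ord0 i.
Definition grad {R : realType} {d : nat} (f : 'rV[R]_d -> R) (x : 'rV[R]_d) : 'rV[R]_d :=
  \row_(i < d) ('D_(basisv i) f x).

Definition twice_differentiable {R : realType} {d : nat} (f : 'rV[R]_d -> R) : Prop :=
  (forall x, differentiable f x) /\ (forall x, differentiable (grad f) x).

Definition L1_nonuniform_smooth {R : realType} {d : nat} (f : 'rV[R]_d -> R) (L1 : R) : Prop :=
  forall th th' : 'rV[R]_d,
    `| f th - f th' - dotv (grad f th') (th - th') |
      <= L1 * norm2 (grad f th') / 2 * norm2 (th - th') ^+ 2.

Definition armijo_log {R : realType} {d : nat} (f : 'rV[R]_d -> R) (fstar h : R)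
    (th : 'rV[R]_d) (eta : R) : Prop :=
  ln (fstar - f (th + eta *: grad f th))
    <= ln (fstar - f th) - h * eta * (norm2 (grad f th) ^+ 2 / (fstar - f th)).

(* Along the gradient ray, non-uniform smoothness gives the ascent bound
   f(th + e g) >= f th + e |g|^2 (1 - L1 |g| e / 2), and the reversed
   Lojasiewicz inequality |g| <= nu (f* - f th) turns every step
   e <= 2(1-h) / (L1 nu (f* - f th)) into an ascent of at least h e |g|^2.
   Since ln is concave, ln a <= ln D - (D - a) / D, which converts this
   ascent into the Armijo condition on the log-loss. The Armijo condition is
   a closed condition on e (the log-loss is continuous along the ray), so the
   supremum of the admissible steps in (0, eta_max] is itself admissible:
   exact backtracking returns it, and it dominates the step exhibited above. *)
From HB Require Import structures.
From mathcomp Require Import all_boot all_order all_algebra.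
From mathcomp Require Import all_classical all_reals all_analysis.
From mathcomp Require Import ring lra.
Set Implicit Arguments. Unset Strict Implicit. Unset Printing Implicit Defensive.
Import Order.TTheory GRing.Theory Num.Theory.
Import numFieldNormedType.Exports.
Local Open Scope classical_set_scope.
Local Open Scope ring_scope.

Section EuclideanRow.
Context {R : realType} {d : nat}.
Implicit Types (u v : 'rV[R]_d) (a : R).

Lemma dotv_ge0 u : 0 <= dotv u u.
Proof. by apply: sumr_ge0 => i _; rewrite -expr2 sqr_ge0. Qed.

Lemma sqr_norm2 u : norm2 u ^+ 2 = dotv u u.
Proof. by rewrite sqr_sqrtr // dotv_ge0. Qed.

Lemma dotvZl a u v : dotv (a *: u) v = a * dotv u v.
Proof. by rewrite /dotv mulr_sumr; apply: eq_bigr => i _; rewrite mxE mulrA. Qed.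

Lemma dotvZr a u v : dotv u (a *: v) = a * dotv u v.
Proof. by rewrite /dotv mulr_sumr; apply: eq_bigr => i _; rewrite mxE; ring. Qed.

End EuclideanRow.

Lemma nonuniform_smooth_ascent (R : realType) (d : nat) (f : 'rV[R]_d -> R)
    (L1 : R) (th : 'rV[R]_d) (e : R) :
  L1_nonuniform_smooth f L1 ->
  f th + e * norm2 (grad f th) ^+ 2 * (1 - L1 * norm2 (grad f th) * e / 2)
    <= f (th + e *: grad f th).
Proof.
move=> smooth; have := smooth (th + e *: grad f th) th.
rewrite (addrC th) addrK !sqr_norm2 dotvZl !dotvZr (addrC _ th).
by rewrite ler_norml => /andP[+ _]; lra.
Qed.

Lemma ln_le_sub_div (R : realType) (a D x : R) :
  0 < a -> 0 < D -> a <= D - x -> ln a <= ln D - x / D.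
Proof.
move=> a0 D0 aDx.
have -> : a = D * (1 + (a / D - 1)) by field; rewrite gt_eqF.
rewrite lnM ?posrE // ?lerD2l; last by rewrite addrC subrK divr_gt0.
have aD_gt0 : 0 < a / D by rewrite divr_gt0.
apply: le_trans (le_ln1Dx _) _; first by lra.
have : a / D <= (D - x) / D by rewrite ler_pM2r ?invr_gt0.
by rewrite mulrBl mulfV ?lt0r_neq0 //; lra.
Qed.

Lemma armijo_log_small_step (R : realType) (d : nat) (f : 'rV[R]_d -> R)
    (fstar L1 nu h : R) (th : 'rV[R]_d) (e : R) :
  (forall x, f x < fstar) -> 0 < L1 -> L1_nonuniform_smooth f L1 ->
  0 < nu -> norm2 (grad f th) <= nu * (fstar - f th) ->
  0 <= e -> e <= 2 * (1 - h) / (L1 * nu * (fstar - f th)) ->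
  armijo_log f fstar h th e.
Proof.
move=> flt L1_gt0 smooth nu_gt0 loja e_ge0 e_small.
have D_gt0 : 0 < fstar - f th by rewrite subr_gt0.
have Q_ge0 : 0 <= e * norm2 (grad f th) ^+ 2 by rewrite mulr_ge0 ?sqr_ge0.
have step_bound : L1 * norm2 (grad f th) * e <= 2 * (1 - h).
  rewrite ler_pdivlMr ?mulr_gt0 // in e_small.
  have : L1 * norm2 (grad f th) * e <= L1 * (nu * (fstar - f th)) * e.
    by apply: ler_wpM2r => //; apply: ler_wpM2l => //; exact: ltW.
  lra.
have ascent : f th + h * e * norm2 (grad f th) ^+ 2 <= f (th + e *: grad f th).
  apply: le_trans (nonuniform_smooth_ascent th e smooth).
  rewrite lerD2l -mulrA [h * _]mulrC ler_wpM2l //; lra.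
rewrite /armijo_log mulrA; apply: ln_le_sub_div => //; first by rewrite subr_gt0.
lra.
Qed.

Definition armijo_gap (R : realType) (d : nat) (f : 'rV[R]_d -> R) (fstar h : R)
    (th : 'rV[R]_d) (e : R) : R :=
  ln (fstar - f (th + e *: grad f th))
    - (ln (fstar - f th) - h * e * (norm2 (grad f th) ^+ 2 / (fstar - f th))).

Lemma armijo_logE (R : realType) (d : nat) (f : 'rV[R]_d -> R) (fstar h : R)
    (th : 'rV[R]_d) (e : R) :
  armijo_log f fstar h th e <-> armijo_gap f fstar h th e <= 0.
Proof. by rewrite /armijo_gap subr_le0. Qed.

Lemma continuous_armijo_gap (R : realType) (d : nat) (f : 'rV[R]_d -> R)
    (fstar h : R) (th : 'rV[R]_d) :
  continuous f -> (forall x, f x < fstar) -> continuous (armijo_gap f fstar h th).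
Proof.
move=> f_cont flt s; apply: cvgB; last first.
  apply: cvgB; first exact: cvg_cst.
  by apply: cvgMr_tmp; apply: cvgMl_tmp; exact: cvg_id.
have loss_cont : {for s, continuous (fun e : R => fstar - f (th + e *: grad f th))}.
  apply: cvgB; first exact: cvg_cst.
  apply: (@continuous_comp _ _ _ (fun e : R => th + e *: grad f th) f) (f_cont _).
  by apply: cvgD; [exact: cvg_cst | apply: cvgZr_tmp; exact: cvg_id].
by apply: continuous_comp loss_cont _; apply: continuous_ln; rewrite subr_gt0.
Qed.

Lemma le0_sup_continuous (R : realType) (A : set R) (phi : R -> R) :
  A !=set0 -> has_ubound A -> {for sup A, continuous phi} ->
  (forall x, A x -> phi x <= 0) -> phi (sup A) <= 0.
Proof.
move=> A0 A_ub phi_cont phi_le0; rewrite leNgt; apply/negP => phi_gt0.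
have [x [Ax]] := closure_sup A0 A_ub (cvgr_gt _ phi_cont _ phi_gt0).
by rewrite ltNge phi_le0.
Qed.

Lemma exists_max_le0_step (R : realType) (phi : R -> R) (emax e0 : R) :
  continuous phi -> 0 < e0 <= emax -> phi e0 <= 0 ->
  exists s, [/\ e0 <= s <= emax, phi s <= 0 &
    forall e, 0 < e <= emax -> phi e <= 0 -> e <= s].
Proof.
move=> phi_cont e0_range phi_e0.
pose S := [set e | 0 < e <= emax /\ phi e <= 0].
have S_e0 : S e0 by [].
have S_ub : has_ubound S by exists emax => e [/andP[_ ->]].
have S_sup : ubound S (sup S) by apply: sup_upper_bound; split => //; exists e0.
exists (sup S); split.
- rewrite S_sup //=; apply: ge_sup; first by exists e0.
  by move=> e [/andP[_ ->]].
- apply: le0_sup_continuous S_ub (phi_cont _) _; first by exists e0.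
  by move=> e [].
- by move=> e ? ?; exact: S_sup.
Qed.

Theorem lemma2 (R : realType) (d : nat) (f : 'rV[R]_d -> R) (fstar L1 nu h etamax : R)
    (th : 'rV[R]_d) :
  twice_differentiable f ->
  fstar = sup [set f x | x in [set: 'rV[R]_d]] ->
  (forall x, f x < fstar) ->
  0 < L1 -> L1_nonuniform_smooth f L1 ->
  0 < nu -> (forall x, norm2 (grad f x) <= nu * (fstar - f x)) ->
  0 < h < 1 -> 0 < etamax ->
  exists eta : R,
    [/\ 0 < eta <= etamax,
        armijo_log f fstar h th eta,
        (forall e : R, 0 < e <= etamax -> armijo_log f fstar h th e -> e <= eta) &
        Num.min etamax (2 * (1 - h) / (L1 * nu * (fstar - f th))) <= eta].
Proof.
move=> [f_diff _] _ flt L1_gt0 smooth nu_gt0 loja /andP[_ h_lt1] etamax_gt0.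
set c := 2 * (1 - h) / (L1 * nu * (fstar - f th)).
have c_gt0 : 0 < c by rewrite divr_gt0 ?mulr_gt0 ?subr_gt0.
have f_cont : continuous f by move=> x; exact: differentiable_continuous.
set eta0 := Num.min etamax c.
have eta0_gt0 : 0 < eta0 by rewrite lt_min etamax_gt0 c_gt0.
have eta0_range : 0 < eta0 <= etamax by rewrite eta0_gt0 ge_min lexx.
have armijo_eta0 : armijo_log f fstar h th eta0.
  apply: armijo_log_small_step L1_gt0 smooth nu_gt0 (loja th) (ltW eta0_gt0) _ => //.
  by rewrite ge_min lexx orbT.
have [eta [/andP[eta0_le eta_le] /armijo_logE armijo_eta eta_max]] :=
  exists_max_le0_step (continuous_armijo_gap (h := h) (th := th) f_cont flt) eta0_range
    (proj1 (armijo_logE _ _ _ _ _) armijo_eta0).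
exists eta; split => //; first by rewrite (lt_le_trans eta0_gt0 eta0_le).
by move=> e e_range /armijo_logE; exact: eta_max.
Qed.
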